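(* Let $0<2\delta\le\kappa<\lambda\le1$, $0<\epsilon<1/2$, and let $n$ be a positive integer. Put \[ D_0=\frac{\lambda\log(n)^2}{\epsilon}\,2^{\sqrt{\lambda\log(n)\log\left(\frac{\lambda\log(n)^2}{\epsilon}\right)/3}},\qquad M_0=D_0^2\,n^{\lambda}\,2^{\sqrt{3\lambda\log(n)\log\left(\frac{\lambda\log(n)^2}{\epsilon}\right)}} \] (logarithms base $2$). Suppose $\mathcal{G}$ is an $(n,M,D,n^{\lambda},(1-\epsilon)D)$-bipartite expander with $D\le D_0$ and $M\le M_0$, and that a Hadamard matrix $\mathbf{H}_M$ of order $M$ is given. Let $\mathbf{Q}$ be the pooling matrix constructed from $\mathcal{G}$ and $\mathbf{H}_M$. Then for every $\bm{z}\in\{0,\pm1\}^n$ with $n^{\kappa}\le\lVert\bm{z}\rVert_0\le n^{\lambda}$ we have $\lVert\mathbf{Q}\bm{z}\rVert_\infty\ge\sqrt{1-2\epsilon}\,n^{\delta}$, and the number of rows (pooling complexity) of $\mathbf{Q}$ is \[ MD\ \le\ n^{\lambda}\left(\frac{\lambda\log(n)^2}{\epsilon}\right)^3 4^{\sqrt{3\lambda\log(n)\log\left(\frac{\lambda\log(n)^2}{\epsilon}\right)}}. \]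
   Context: A bipartite graph $\mathcal{G}=([N],[M],\mathsf{E})$ is left-$D$-regular if each left vertex has exactly $D$ neighbours; $\Gamma(S)$ is the set of neighbours of $S\subseteq[N]$. It is an $(N,M,D,K,A)$-bipartite expander if it is left-$D$-regular and $|\Gamma(S)|\ge A|S|$ for all $S\subseteq[N]$ with $|S|\le K$. The induced matrix $\mathbf{B}_{\mathcal{G}}\in\{0,1\}^{M\times N}$ has $(j,i)$-entry $1$ iff $(i,j)\in\mathsf{E}$. A Hadamard matrix of order $M$ is an $M\times M$ $\pm1$-matrix with $\mathbf{H}_M^{\intercal}\mathbf{H}_M=M\mathbf{I}$. Construction of $\mathbf{Q}$: write $\mathbf{B}_{\mathcal{G}}=\sum_{i=1}^D\mathbf{B}_i$ with each $\mathbf{B}_i\in\{0,1\}^{M\times N}$ having exactly one nonzero entry per column; set $\mathbf{D}_i=\mathbf{H}_M\mathbf{B}_i$ and stack $\mathbf{Q}=[\mathbf{D}_1;\dots;\mathbf{D}_D]$ vertically (an $MD\times N$ matrix). $\lVert\cdot\rVert_0$ counts nonzero entries; $\lVert\cdot\rVert_\infty$ is the max absolute entry. *)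

From HB Require Import structures.
From mathcomp Require Import all_boot all_order all_algebra.
From mathcomp Require Import all_classical all_reals all_analysis.
Set Implicit Arguments. Unset Strict Implicit. Unset Printing Implicit Defensive.
Import Order.TTheory GRing.Theory Num.Theory.
Local Open Scope ring_scope.

Section Defs.
Variable R : realType.

Definition log2 (x : R) : R := ln x / ln 2.

Definition nbhd (N M : nat) (E : {set 'I_N * 'I_M}) (S : {set 'I_N}) : {set 'I_M} :=
  [set j | [exists i in S, (i, j) \in E]].

Definition left_regular (N M D : nat) (E : {set 'I_N * 'I_M}) : Prop :=
  forall i : 'I_N, #|[set j | (i, j) \in E]| = D.

Definition bipartite_expander (N M D : nat) (K A : R) (E : {set 'I_N * 'I_M}) : Prop :=
  left_regular D E /\
  forall S : {set 'I_N}, #|S|%:R <= K -> A * #|S|%:R <= #|nbhd E S|%:R.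

Definition induced_matrix (N M : nat) (E : {set 'I_N * 'I_M}) : 'M[R]_(M, N) :=
  \matrix_(j < M, i < N) ((i, j) \in E)%:R.

Definition is_hadamard (M : nat) (H : 'M[R]_M) : Prop :=
  (forall i j, H i j = 1 \/ H i j = -1) /\ H^T *m H = M%:R%:M.

Definition valid_decomposition (N M D : nat) (E : {set 'I_N * 'I_M})
    (B : 'I_D -> 'M[R]_(M, N)) : Prop :=
  (forall i j k, B i j k = 0 \/ B i j k = 1) /\
  (forall i k, #|[set j | B i j k != 0]| = 1) /\
  induced_matrix E = \sum_(i < D) B i.

(* Q = [H B_1; ...; H B_D] stacked vertically: row i*M + j of Q is row j of
   D_i = H B_i (mxvec enumerates (i,j) in lexicographic order). *)
Definition pooling_matrix (N M D : nat) (H : 'M[R]_M) (B : 'I_D -> 'M[R]_(M, N))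
  : 'M[R]_(D * M, N) :=
  \matrix_(r < D * M, k < N) mxvec (\matrix_(i < D, j < M) (H *m B i) j k) 0 r.

Definition norm0 (N : nat) (z : 'cV[R]_N) : nat := #|[set i | z i 0 != 0]|.

Definition norminf (m : nat) (v : 'cV[R]_m) : R := \big[Num.max/0]_(r < m) `|v r 0|.

End Defs.

From HB Require Import structures.
From mathcomp Require Import all_boot all_order all_algebra.
From mathcomp Require Import all_classical all_reals all_analysis.
From mathcomp Require Import ring lra.
Import Order.TTheory GRing.Theory Num.Theory.
Set Implicit Arguments. Unset Strict Implicit.
Local Open Scope ring_scope.

(* Proof of Theorem 3.  Fix z in {0,+-1}^n with support S and write
   x_ij = (B_i z)_j and c_ij = sum_k B_i(j,k) z_k^2, the number of support
   vertices that B_i sends to pool j.  A sum of c signs satisfies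
   (sum of signs)^2 >= g(c) := 2 [c <> 0] - c, and g is superadditive on
   nonnegative reals, so with d_j = sum_i c_ij (the edges from S to j)
     sum_ij x_ij^2 >= sum_j g(d_j) = 2 |Gamma(S)| - D |S| >= (1 - 2 eps) D |S|
   by expansion.  As H^T H = M I, every block obeys |H B_i z|^2 = M |B_i z|^2,
   hence |Q z|_2^2 >= (1 - 2 eps) M D |S|, while |Q z|_2^2 <= M D |Q z|_oo^2.
   This gives |Q z|_oo >= sqrt((1 - 2 eps) |S|) >= sqrt(1 - 2 eps) n^delta. *)

Section CollisionGain.
Variable R : realDomainType.

(* g(c) = 2 [c <> 0] - c: the least possible square of a sum of c signs. *)
Definition collision_gain (c : R) : R := 2 * (c != 0)%:R - c.

(* Induction invariant for a sum x of c signs: either c = x = 0, or c >= 1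
   and x^2 + c >= 2 (one sign gives x^2 = 1, several give c >= 2). *)
Lemma sign_sum_invariant (I : eqType) (s : seq I) (b t : I -> R) :
  (forall k, b k = 0 \/ b k = 1) ->
  (forall k, t k = 0 \/ t k = 1 \/ t k = -1) ->
  (\sum_(k <- s) b k * t k ^+ 2 = 0 /\ \sum_(k <- s) b k * t k = 0) \/
  (1 <= \sum_(k <- s) b k * t k ^+ 2 /\
   2 <= (\sum_(k <- s) b k * t k) ^+ 2 + \sum_(k <- s) b k * t k ^+ 2).
Proof.
move=> b01 t01; elim: s => [|a s IH]; first by left; rewrite !big_nil.
rewrite !big_cons; have [-> | ->] := b01 a; first by rewrite !mul0r !add0r.
rewrite !mul1r; have [-> | [-> | ->]] := t01 a; first by rewrite expr0n !add0r.
all: right; rewrite ?sqrrN expr1n.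
all: set c := \sum_(k <- s) b k * t k ^+ 2 in IH *.
all: set x := \sum_(k <- s) b k * t k in IH *.
- by have := sqr_ge0 (1 + x); case: IH => [[-> ->] | ]; nra.
- by have := sqr_ge0 (-1 + x); case: IH => [[-> ->] | ]; nra.
Qed.

Lemma collision_gain_le_sq (I : eqType) (s : seq I) (b t : I -> R) :
  (forall k, b k = 0 \/ b k = 1) ->
  (forall k, t k = 0 \/ t k = 1 \/ t k = -1) ->
  collision_gain (\sum_(k <- s) b k * t k ^+ 2) <= (\sum_(k <- s) b k * t k) ^+ 2.
Proof.
move=> b01 t01; rewrite /collision_gain.
have [[-> ->] | [c_ge1 sq_ge2]] := sign_sum_invariant s b01 t01.
  by rewrite eqxx mulr0 subr0 expr0n.
by rewrite gt_eqF ?mulr1; lra.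
Qed.

Lemma collision_gain_sum (I : finType) (c : I -> R) :
  (forall i, 0 <= c i) -> collision_gain (\sum_i c i) <= \sum_i collision_gain (c i).
Proof.
move=> c_ge0; rewrite /collision_gain sumrB -mulr_sumr lerB // ler_wpM2l //.
have [_ | /eqP sum_neq0] := boolP (\sum_i c i == 0); first exact: sumr_ge0.
have [i /andP [_ ci_gt0]] := psumr_neq0P (fun i _ => c_ge0 i) sum_neq0.
rewrite (bigD1 i) //= gt_eqF // lerDl; exact: sumr_ge0.
Qed.

End CollisionGain.

Section SupNorm.
Variables (R : realType) (m : nat) (v : 'cV[R]_m).

Lemma norminf_ge0 : 0 <= norminf v.
Proof. exact: bigmax_ge_id. Qed.

Lemma norminf_ge_entry (r : 'I_m) : `|v r 0| <= norminf v.
Proof. exact: (le_bigmax _ (fun r => `|v r 0|)). Qed.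

Lemma sum_sq_le_norminf : \sum_r v r 0 ^+ 2 <= m%:R * norminf v ^+ 2.
Proof.
rewrite -[m in m%:R]card_ord mulr_natl -sumr_const; apply: ler_sum => r _.
by rewrite -real_normK ?num_real // lerXn2r ?nnegrE ?norminf_ge0 ?norminf_ge_entry.
Qed.

End SupNorm.

Lemma hadamard_sum_sq (R : comPzRingType) (M : nat) (H : 'M[R]_M) (w : 'cV[R]_M) :
  H^T *m H = M%:R%:M ->
  \sum_j (H *m w) j 0 ^+ 2 = M%:R * \sum_j w j 0 ^+ 2.
Proof.
have sum_sq (u : 'cV[R]_M) : \sum_j u j 0 ^+ 2 = (u^T *m u) 0 0.
  by rewrite mxE; apply: eq_bigr => j _; rewrite mxE expr2.
move=> HtH; rewrite !sum_sq trmx_mul -mulmxA (mulmxA H^T) HtH.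
by rewrite mul_scalar_mx -scalemxAr mxE.
Qed.

Section PoolingMatrix.
Variables (R : realType) (n M D : nat) (H : 'M[R]_M) (B : 'I_D -> 'M[R]_(M, n)).

Lemma pooling_mul_entry (z : 'cV[R]_n) (i : 'I_D) (j : 'I_M) :
  (pooling_matrix H B *m z) (mxvec_index i j) 0 = (H *m (B i *m z)) j 0.
Proof.
rewrite mulmxA !mxE; apply: eq_bigr => k _.
by rewrite !mxE mxvecE !mxE.
Qed.

Lemma pooling_energy (z : 'cV[R]_n) :
  H^T *m H = M%:R%:M ->
  \sum_r (pooling_matrix H B *m z) r 0 ^+ 2 =
  M%:R * \sum_i \sum_j (B i *m z) j 0 ^+ 2.
Proof.
move=> HtH.
rewrite mulr_sumr (eq_bigr _ (fun i _ => esym (hadamard_sum_sq (B i *m z) HtH))).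
rewrite (reindex _ (curry_mxvec_bij _ _)) pair_bigA /=.
by apply: eq_bigr => -[i j] _; rewrite pooling_mul_entry.
Qed.

End PoolingMatrix.

Lemma sum_indicator (R : pzSemiRingType) (T : finType) (P : pred T) :
  \sum_(t : T) (P t)%:R = #|[set t | P t]|%:R :> R.
Proof.
rewrite -natr_sum -sum1_card [in RHS]big_mkcond /=.
by congr _%:R; apply: eq_bigr => t _; rewrite inE; case: (P t).
Qed.

Section ExpanderEnergy.
Variables (R : realType) (n M D : nat) (E : {set 'I_n * 'I_M}).
Variables (B : 'I_D -> 'M[R]_(M, n)) (z : 'cV[R]_n).
Hypothesis regular : left_regular D E.
Hypothesis decomposition : valid_decomposition E B.
Hypothesis z_signs : forall k, z k 0 = 0 \/ z k 0 = 1 \/ z k 0 = -1.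

Let S := [set k | z k 0 != 0].

(* Number of support vertices that B_i hashes into pool j. *)
Definition pool_load (i : 'I_D) (j : 'I_M) : R := \sum_k B i j k * z k 0 ^+ 2.

Lemma sq_sign_support (k : 'I_n) : z k 0 ^+ 2 = (k \in S)%:R.
Proof.
by rewrite inE; have [->|[->|->]] := z_signs k;
  rewrite ?expr0n ?sqrrN ?expr1n ?eqxx ?oppr_eq0 ?oner_eq0.
Qed.

Lemma pool_load_ge0 i j : 0 <= pool_load i j.
Proof.
apply: sumr_ge0 => k _; rewrite sq_sign_support.
by have [+ _] := decomposition; move=> /(_ i j k) [->|->]; rewrite ?mul0r ?mul1r.
Qed.

Lemma total_pool_load (j : 'I_M) :
  \sum_i pool_load i j = #|[set k | (k \in S) && ((k, j) \in E)]|%:R.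
Proof.
have [_ [_ B_sum]] := decomposition.
rewrite -sum_indicator exchange_big /=; apply: eq_bigr => k _.
rewrite -mulr_suml sq_sign_support -mulnb natrM mulrC; congr (_ * _).
by rewrite -summxE -B_sum mxE.
Qed.

Lemma total_pool_load_neq0 (j : 'I_M) :
  (\sum_i pool_load i j != 0) = (j \in nbhd E S).
Proof.
rewrite total_pool_load pnatr_eq0 cards_eq0 inE.
by apply/set0Pn/existsP => -[k]; rewrite ?inE => ?; exists k; rewrite ?inE.
Qed.

(* Every support vertex has D edges, so the total load is D |S|. *)
Lemma sum_total_pool_load : \sum_j \sum_i pool_load i j = D%:R * #|S|%:R.
Proof.
under eq_bigr => j _ do rewrite total_pool_load -sum_indicator.
rewrite exchange_big -sum_indicator mulr_sumr; apply: eq_bigr => k _.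
rewrite -(regular k) -sum_indicator mulr_suml; apply: eq_bigr => j _.
by rewrite -mulnb natrM mulrC inE.
Qed.

Lemma block_energy_ge :
  2 * #|nbhd E S|%:R - D%:R * #|S|%:R <= \sum_i \sum_j (B i *m z) j 0 ^+ 2.
Proof.
have [B01 _] := decomposition.
have gain_pool i j : collision_gain (pool_load i j) <= (B i *m z) j 0 ^+ 2.
  by rewrite mxE; apply: collision_gain_le_sq.
rewrite exchange_big /= -sum_total_pool_load -[#|_|%:R]sum_indicator.
rewrite mulr_sumr -sumrB.
apply: ler_sum => j _.
have -> : [exists k in S, (k, j) \in E] = (\sum_i pool_load i j != 0).
  by rewrite total_pool_load_neq0 inE.
apply: le_trans (collision_gain_sum (pool_load_ge0 ^~ j)) _.
exact: ler_sum.
Qed.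

End ExpanderEnergy.

Lemma pooling_sup_norm (R : realType) (n M D : nat) (E : {set 'I_n * 'I_M})
    (H : 'M[R]_M) (B : 'I_D -> 'M[R]_(M, n)) (z : 'cV[R]_n) (eps : R) :
  (0 < D)%N -> eps < 1 ->
  left_regular D E -> valid_decomposition E B -> is_hadamard H ->
  (forall k, z k 0 = 0 \/ z k 0 = 1 \/ z k 0 = -1) ->
  (0 < norm0 z)%N ->
  (1 - eps) * D%:R * (norm0 z)%:R <= #|nbhd E [set k | z k 0 != 0]|%:R ->
  Num.sqrt ((1 - 2 * eps) * (norm0 z)%:R) <= norminf (pooling_matrix H B *m z).
Proof.
move=> D_gt0 eps_lt1 regular decomposition [_ HtH] z_signs supp_gt0 expansion.
set s : R := (norm0 z)%:R in expansion *; set g := #|nbhd E _|%:R in expansion.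
set v := pooling_matrix H B *m z.
have D_pos : 0 < D%:R :> R by rewrite ltr0n.
have M_pos : 0 < M%:R :> R.
  apply: lt_le_trans (_ : g <= _).
    apply: lt_le_trans expansion; rewrite !mulr_gt0 ?ltr0n //; lra.
  by rewrite ler_nat (leq_trans (max_card _)) ?card_ord.
have energy_ge : M%:R * (D%:R * ((1 - 2 * eps) * s)) <= \sum_r v r 0 ^+ 2.
  rewrite pooling_energy // ler_pM2l //.
  apply: le_trans (block_energy_ge regular decomposition z_signs); rewrite -/s -/g.
  by rewrite mulrCA mulrBl mul1r; lra.
have energy_le := sum_sq_le_norminf v.
rewrite -(ler_sqr (sqrtr_ge0 _)) ?nnegrE ?norminf_ge0 //.
have [neg | nonneg] := ltrP ((1 - 2 * eps) * s) 0.
  by rewrite ltr0_sqrtr // expr0n sqr_ge0.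
rewrite sqr_sqrtr // -(ler_pM2l (mulr_gt0 M_pos D_pos)) -mulrA -natrM mulnC.
exact: le_trans energy_ge energy_le.
Qed.

Lemma powR_le_sqrt (R : realType) (a e s : R) :
  1 <= a -> a `^ (2 * e) <= s -> a `^ e <= Num.sqrt s.
Proof.
move=> a_ge1 le_s; have s_ge0 := le_trans (powR_ge0 _ _) le_s.
rewrite -(ger0_norm (powR_ge0 a e)) -sqrtr_sqr ler_sqrt //.
by rewrite -powR_mulrn ?powR_ge0 // -powRrM mulrC.
Qed.

(* Relates the two exponents sqrt(3 x) and sqrt(x / 3) of D0 and M0. *)
Lemma sqrt_mul_three (R : rcfType) (a b c : R) :
  Num.sqrt (3 * a * b * c) = 3 * Num.sqrt (a * b * c / 3).
Proof.
have -> : 3 * a * b * c = 3 ^+ 2 * (a * b * c / 3) by field.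
by rewrite sqrtrM ?sqr_ge0 // sqrtr_sqr ger0_norm.
Qed.

Lemma pooling_rows_bound (R : realType) (L N s : R) (M D : nat) :
  0 <= L -> 0 <= N ->
  D%:R <= L * 2 `^ s -> M%:R <= (L * 2 `^ s) ^+ 2 * N * 2 `^ (3 * s) ->
  (M * D)%:R <= N * L ^+ 3 * 4 `^ (3 * s).
Proof.
move=> L_ge0 N_ge0 D_le M_le; rewrite natrM.
apply: le_trans (ler_pM (ler0n _ _) (ler0n _ _) M_le D_le) _.
have four : (4 : R) `^ (3 * s) = 2 `^ (3 * s) * 2 `^ (3 * s).
  by rewrite -powRM ?ler0n // -natrM.
have cube : (2 : R) `^ (3 * s) = (2 `^ s) ^+ 3.
  by rewrite mulrC powRrM powR_mulrn ?powR_ge0.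
by rewrite four cube; lra.
Qed.

Theorem theorem3 (R : realType) (delta kappa lambda eps : R) (n M D : nat)
  (E : {set 'I_n * 'I_M}) (H : 'M[R]_M) (B : 'I_D -> 'M[R]_(M, n)) :
  0 < 2 * delta -> 2 * delta <= kappa -> kappa < lambda -> lambda <= 1 ->
  0 < eps -> eps < 1 / 2 -> (0 < n)%N -> (0 < D)%N ->
  let L := lambda * (log2 n%:R) ^+ 2 / eps in
  let D0 := L * 2 `^ (Num.sqrt (lambda * log2 n%:R * log2 L / 3)) in
  let M0 := D0 ^+ 2 * n%:R `^ lambda * 2 `^ (Num.sqrt (3 * lambda * log2 n%:R * log2 L)) in
  bipartite_expander D (n%:R `^ lambda) ((1 - eps) * D%:R) E ->
  D%:R <= D0 -> M%:R <= M0 ->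
  is_hadamard H ->
  valid_decomposition E B ->
  (forall z : 'cV[R]_n,
     (forall i, z i 0 = 0 \/ z i 0 = 1 \/ z i 0 = -1) ->
     n%:R `^ kappa <= (norm0 z)%:R -> (norm0 z)%:R <= n%:R `^ lambda ->
     Num.sqrt (1 - 2 * eps) * n%:R `^ delta <= norminf (pooling_matrix H B *m z))
  /\
  (M * D)%:R <= n%:R `^ lambda * L ^+ 3 * 4 `^ (Num.sqrt (3 * lambda * log2 n%:R * log2 L)).
Proof.
move=> delta_gt0 delta_kappa kappa_lambda lambda_le1 eps_gt0 eps_lt_half n_gt0 D_gt0
  L D0 M0 [regular expansion] D_le M_le hadamard decomposition.
split=> [z z_signs kappa_le lambda_ge | ].
  have supp_gt0 : (0 < norm0 z)%N.
    by rewrite -(ltr0n R); apply: lt_le_trans kappa_le; rewrite powR_gt0 ?ltr0n.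
  have eps_lt1 : eps < 1 by lra.
  have expansion_z := expansion _ lambda_ge.
  apply: le_trans (pooling_sup_norm D_gt0 eps_lt1 regular decomposition hadamard
    z_signs supp_gt0 expansion_z).
  have eps_le : 0 <= 1 - 2 * eps by lra.
  rewrite sqrtrM // ler_wpM2l ?sqrtr_ge0 // powR_le_sqrt ?ler1n //.
  by apply: le_trans kappa_le; apply: ler_powR; rewrite ?ler1n.
have lambda_ge0 : 0 <= lambda.
  by apply/ltW/(lt_trans delta_gt0)/(le_lt_trans delta_kappa).
have L_ge0 : 0 <= L.
  exact: divr_ge0 (mulr_ge0 lambda_ge0 (sqr_ge0 _)) (ltW eps_gt0).
move: D_le M_le; rewrite /M0 /D0 sqrt_mul_three => D_le M_le.
exact: pooling_rows_bound L_ge0 (powR_ge0 _ _) D_le M_le.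
Qed.
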